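(* Let $\mathbf{x}\in\mathbb{R}^p$ be a random vector with a joint density, and let $\Pi\in\{1,\dots,K\}$ be a random missingness-pattern label, with $\Pi=1$ meaning the case is complete (all coordinates observed) and $\Pi=k$ meaning the coordinates in $\mathbf{mis}(k)$ are missing and those in $\mathbf{obs}(k)$ are observed. Let $\mathbf{obs}=\bigcap_{k=1}^K\mathbf{obs}(k)\neq\varnothing$ and $\mathbf{mis}=\bigcup_{k=1}^K\mathbf{mis}(k)$, and assume the MAR condition: $\mathbf{x}_{\mathbf{mis}}$ is conditionally independent of $\Pi$ given $\mathbf{x}_{\mathbf{obs}}$. Let $P$ denote the distribution of $\mathbf{x}$ given $\Pi=1$ (the complete-case distribution), with density $\phi(\cdot\mid \Pi=1)$. Fix $k\in\{2,\dots,K\}$ and let $G_k$ be a generator which, given an input $\mathbf{x}$, an independent noise $\mathbf{z}\sim\mathcal{N}(0,\mathbf{I}_p)$ and the mask $\mathbf{m}_k$, outputs $\widehat{\mathbf{x}}=\mathbf{x}\odot\mathbf{m}_k+\widehat{G}_k(\mathbf{x}\odot\mathbf{m}_k+\mathbf{z}\odot(1-\mathbf{m}_k))\odot(1-\mathbf{m}_k)$, so that the imputed part $\widehat{\mathbf{x}}_{\mathbf{mis}(k)}$ has a conditional density $p_{\theta_k}(\cdot\mid\mathbf{x}_{\mathbf{obs}(k)})$ depending only on $\mathbf{x}_{\mathbf{obs}(k)}$. Let $P_k$ be the distribution of $\widehat{\mathbf{x}}$ when $\mathbf{x}\sim P$. Suppose $(G_2,D_2,\dots,G_K,D_K)$ is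 an optimal solution of the minimax problem $$\min_{G_2,\dots,G_K}\max_{D_2,\dots,D_K}\sum_{k=2}^K\Big(\mathbb{E}_{\widehat{\mathbf{x}}\sim P_k}[D_k(\widehat{\mathbf{x}})]-\mathbb{E}_{\mathbf{x}\sim P}[D_k(\mathbf{x})]\Big)$$ over 1-Lipschitz discriminators $D_k:\mathbb{R}^p\to\mathbb{R}$, in the sense that the optimal value is $0$, i.e. the Wasserstein-1 distance between $P$ and $P_k$ is zero, so $P_k=P$. Then for (almost) every $t_1$ in the support of the complete-case distribution of $\mathbf{x}_{\mathbf{obs}(k)}$ and every $t_2$, $$p_{\theta_k}(\widehat{\mathbf{x}}_{\mathbf{mis}(k)}=t_2\mid \mathbf{x}_{\mathbf{obs}(k)}=t_1)=f(\mathbf{x}_{\mathbf{mis}(k)}=t_2\mid\mathbf{x}_{\mathbf{obs}(k)}=t_1),$$ i.e. $G_k$ learns the true conditional distribution of the missing variables of pattern $k$ given its observed variables.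
   Context: Data consist of $p$ variables; cases are grouped into $K$ missingness patterns. For pattern $k$, $\mathbf{obs}(k)\subseteq\{1,\dots,p\}$ is the index set of observed variables and $\mathbf{mis}(k)$ its complement; pattern $1$ has $\mathbf{obs}(1)=\{1,\dots,p\}$. The mask vector $\mathbf{m}_k\in\{0,1\}^p$ has $\mathbf{m}_k(j)=1$ iff $j\in\mathbf{obs}(k)$; $\odot$ is elementwise multiplication; $\widehat{G}_k:\mathbb{R}^p\to\mathbb{R}^p$ is the generator network. For an index set $S$, $\mathbf{x}_S$ is the subvector of $\mathbf{x}$ on $S$. $f(\mathbf{x}_{\mathbf{mis}(k)}\mid\mathbf{x}_{\mathbf{obs}(k)})$ denotes the true conditional density of $\mathbf{x}_{\mathbf{mis}(k)}$ given $\mathbf{x}_{\mathbf{obs}(k)}$ in the full (not pattern-conditioned) data distribution. *)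

(* R^p is modelled as [p.-tuple R], which mathcomp-analysis equips with the
   product (coordinate-generated) sigma-algebra.  Lebesgue integration over
   R^S (S a set of coordinates) is the iterated one-dimensional Lebesgue
   integral over the coordinates in S (Tonelli), the other coordinates being
   held fixed. *)
From HB Require Import structures.
From mathcomp Require Import all_boot all_order all_algebra.
From mathcomp Require Import all_classical all_reals.
From mathcomp Require Import topology normedtype sequences measure lebesgue_measure
  lebesgue_integral probability normal_distribution numfun.

Set Implicit Arguments.
Unset Strict Implicit.
Unset Printing Implicit Defensive.
Import Order.TTheory GRing.Theory Num.Theory.
Local Open Scope classical_set_scope.
Local Open Scope ring_scope.

Section Defs.
Variables (R : realType) (p : nat).

Definition setc (t : p.-tuple R) (j : 'I_p) (y : R) : p.-tuple R :=
  [tuple if i == j then y else tnth t i | i < p].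

Fixpoint iint (s : seq 'I_p) (h : p.-tuple R -> \bar R) (t : p.-tuple R)
    : \bar R :=
  match s with
  | [::] => h t
  | j :: s' => (\int[@lebesgue_measure R]_(y in setT) iint s' h (setc t j y))%E
  end.

Definition zerov : p.-tuple R := [tuple 0 | _ < p].

Definition leb_int (h : p.-tuple R -> \bar R) : \bar R :=
  iint (enum 'I_p) h zerov.

(* marginal density: integrate the coordinates in S out of the density f;
   the result depends only on the coordinates outside S *)
Definition marg (S : {set 'I_p}) (f : p.-tuple R -> R) (t : p.-tuple R)
    : \bar R :=
  iint (enum S) (fun v => (f v)%:E) t.

Definition cond_dens (S : {set 'I_p}) (f : p.-tuple R -> R) (t : p.-tuple R)
    : R :=
  f t / fine (marg S f t).

Definition ae_leb (P : p.-tuple R -> Prop) : Prop :=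
  exists N : set (p.-tuple R), measurable N /\
    leb_int (fun v => (\1_N v)%:E) = 0%E /\ ~` [set t | P t] `<=` N.

Definition is_density (f : p.-tuple R -> R) : Prop :=
  measurable_fun setT f /\ (forall t, 0 <= f t).

Definition std_gauss (z : p.-tuple R) : R :=
  \prod_(i < p) normal_pdf 0 1 (tnth z i).

Definition mask (O : {set 'I_p}) (i : 'I_p) : R := (i \in O)%:R.

Definition gen_out (Ghat : p.-tuple R -> p.-tuple R) (O : {set 'I_p})
    (x z : p.-tuple R) : p.-tuple R :=
  let inp := [tuple tnth x i * mask O i + tnth z i * (1 - mask O i) | i < p] in
  [tuple tnth x i * mask O i + tnth (Ghat inp) i * (1 - mask O i) | i < p].

End Defs.

(* Let S be the coordinates missing in pattern k and phi the complete-case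
   density.  Testing P_k = P on indicators and disintegrating over the
   S-coordinates shows that marg_S(phi) * p_theta = phi almost everywhere.
   By MAR, phi is the full density f times a factor that depends only on the
   always-observed coordinates, hence only on coordinates outside S; the
   factor therefore cancels in phi / marg_S(phi), which leaves
   f / marg_S(f), the conditional density of x_S given the other coordinates. *)

From HB Require Import structures.
From mathcomp Require Import all_boot all_order all_algebra.
From mathcomp Require Import all_classical all_reals.
From mathcomp Require Import topology normedtype sequences measure lebesgue_measure
  lebesgue_integral probability normal_distribution numfun.
From mathcomp Require Import measurable_realfun.
From mathcomp.algebra_tactics Require Import ring.

Set Implicit Arguments.
Unset Strict Implicit.
Unset Printing Implicit Defensive.
Import Order.TTheory GRing.Theory Num.Theory.
Local Open Scope classical_set_scope.
Local Open Scope ring_scope.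

Section IteratedIntegral.
Context {R : realType} {p : nat}.
Local Notation T := (p.-tuple R).
Local Notation mu := (@lebesgue_measure R).
Implicit Types (h : T -> \bar R) (s : seq 'I_p) (t : T).

Lemma tnth_setc t j y i : tnth (setc t j y) i = if i == j then y else tnth t i.
Proof. by rewrite /setc tnth_mktuple. Qed.

Lemma setcC t i j x y : i != j -> setc (setc t i x) j y = setc (setc t j y) i x.
Proof.
move=> ij; apply: eq_from_tnth => l; rewrite !tnth_setc.
case: (eqVneq l j) => [lj|]; case: (eqVneq l i) => [li|] //.
by move: ij; rewrite -lj -li eqxx.
Qed.

Lemma measurable_setc j : measurable_fun setT (fun ty : T * R => setc ty.1 j ty.2).
Proof.
apply/measurable_fun_tnthP => i.
rewrite (_ : _ \o _ = fun ty : T * R => if i == j then ty.2 else tnth ty.1 i);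
  last by apply/funext => ty; rewrite /= tnth_setc.
case: eqP => _; first exact: measurable_snd.
exact: measurableT_comp (measurable_tnth i) measurable_fst.
Qed.

Lemma measurable_setc1 t j : measurable_fun setT (setc t j).
Proof.
have -> : setc t j = (fun ty : T * R => setc ty.1 j ty.2) \o (fun y => (t, y)) by [].
apply: measurableT_comp; [exact: measurable_setc | exact: pair1_measurable].
Qed.

Lemma measurable_setc2 t i j :
  measurable_fun setT (fun xy : R * R => setc (setc t i xy.1) j xy.2).
Proof.
apply/measurable_fun_tnthP => l.
rewrite (_ : _ \o _ = fun xy : R * R =>
   if l == j then xy.2 else if l == i then xy.1 else tnth t l);
  last by apply/funext => xy; rewrite /= !tnth_setc.
case: eqP => _; first exact: measurable_snd.
case: eqP => _; [exact: measurable_fst | exact: measurable_cst].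
Qed.

Lemma iint_ge0 s h : (forall v, (0 <= h v)%E) -> forall t, (0 <= iint s h t)%E.
Proof.
elim: s h => [|j s IH] h h0 t //=.
by apply: integral_ge0 => y _; exact: IH.
Qed.

Lemma measurable_iint s h : measurable_fun [set: T] h -> (forall v, (0 <= h v)%E) ->
  measurable_fun [set: T] (iint s h).
Proof.
elim: s h => [|j s IH] h mh h0 //=.
set F := fun ty : T * R => iint s h (setc ty.1 j ty.2).
have mF : measurable_fun setT F := measurableT_comp (IH h mh h0) (measurable_setc j).
exact: (measurable_fun_fubini_tonelli_F (m2 := mu) F mF (fun x => iint_ge0 _ h0 _)).
Qed.

Lemma measurable_iint_setc s h t j : measurable_fun [set: T] h ->
  (forall v, (0 <= h v)%E) -> measurable_fun [set: R] (fun y => iint s h (setc t j y)).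
Proof.
by move=> mh h0; exact: measurableT_comp (measurable_iint s mh h0) (measurable_setc1 t j).
Qed.

Definition eq_outside s t t' := forall i, i \notin s -> tnth t i = tnth t' i.

Lemma iint_eq_outside s h t t' : eq_outside s t t' -> iint s h t = iint s h t'.
Proof.
elim: s t t' => [|j s IH] t t' /= H.
  by congr h; apply: eq_from_tnth => i; exact: H.
apply: eq_integral => y _; apply: IH => i Hi; rewrite !tnth_setc.
case: eqP => // /eqP ij; apply: H; by rewrite inE negb_or ij.
Qed.

Lemma eq_outside_sub s1 s2 t t' : {subset s1 <= s2} ->
  eq_outside s1 t t' -> eq_outside s2 t t'.
Proof. by move=> s12 H i /negP i2; apply: H; apply/negP => /s12. Qed.

Lemma iint_cat s1 s2 h : iint (s1 ++ s2) h = iint s1 (iint s2 h).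
Proof. by elim: s1 => //= j s1 IH; apply/funext => t; rewrite IH. Qed.

Lemma iint0 s t : iint s (fun _ => 0%E) t = 0%E.
Proof.
elim: s t => [|j s IH] t //=.
by rewrite (eq_integral (fun _ => 0%E)) ?integral0 // => y _; exact: IH.
Qed.

Section NonnegativeIntegrand.
Variable h : T -> \bar R.
Hypotheses (mh : measurable_fun [set: T] h) (h0 : forall v, (0 <= h v)%E).

(* Tonelli for two consecutive coordinates. *)
Lemma iint_swap i j s : i != j -> iint (i :: j :: s) h = iint (j :: i :: s) h.
Proof.
move=> ij; apply/funext => t /=.
set F := fun xy : R * R => iint s h (setc (setc t i xy.1) j xy.2).
have mF : measurable_fun setT F.
  exact: measurableT_comp (measurable_iint s mh h0) (measurable_setc2 t i j).
rewrite (fubini_tonelli (m1 := mu) (m2 := mu) F mF (fun x => iint_ge0 _ h0 _)) /F /=.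
by apply: eq_integral => y _; apply: eq_integral => x _; rewrite setcC.
Qed.

Lemma iint_perm s1 s2 : uniq s1 -> perm_eq s1 s2 -> iint s1 h = iint s2 h.
Proof.
have front a j b : j \notin a -> iint (a ++ j :: b) h = iint (j :: a ++ b) h.
  elim: a => [|x a IH] //; rewrite inE negb_or => /andP[jx ja].
  rewrite !cat_cons -iint_swap 1?eq_sym //.
  by apply/funext => t /=; rewrite IH.
elim: s1 s2 => [|j s1 IH] s2; first by move=> _ /perm_size; case: s2.
move=> /andP[js1 us1] pe.
have js2 : j \in s2 by rewrite -(perm_mem pe) mem_head.
case/splitPr: js2 pe => p1 p2 pe.
have jp1 : j \notin p1.
  have : uniq (p1 ++ j :: p2) by rewrite -(perm_uniq pe) /= js1.
  by rewrite cat_uniq /= => /and3P[_ /norP[]].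
rewrite front //; apply/funext => t /=; rewrite (IH (p1 ++ p2)) //.
rewrite -(perm_cons j); apply: perm_trans pe _.
by have := perm_catCA p1 [:: j] p2; rewrite /= => /permPl ->.
Qed.

Lemma leb_int_split (S : {set 'I_p}) :
  leb_int h = iint (enum (~: S)%SET) (iint (enum S) h) (zerov R p).
Proof.
rewrite /leb_int -iint_cat; congr (_ (zerov R p)); apply: iint_perm.
  exact: enum_uniq.
apply: uniq_perm; first exact: enum_uniq.
  rewrite cat_uniq !enum_uniq /= andbT; apply/hasPn => x /=.
  by rewrite !mem_enum inE => ->.
by move=> x /=; rewrite mem_cat !mem_enum !inE; case: (x \in S).
Qed.

Lemma iintMl s (a : T -> \bar R) : (forall v, (0 <= a v)%E) ->
  (forall t t', eq_outside s t t' -> a t = a t') ->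
  forall t, iint s (fun v => a v * h v)%E t = (a t * iint s h t)%E.
Proof.
move=> a0; elim: s => [|j s IH] Ha t //=.
transitivity (\int[mu]_(y in setT) (a t * iint s h (setc t j y)))%E.
  apply: eq_integral => y _; rewrite IH.
    congr (_ * _)%E; apply: Ha => i; rewrite inE negb_or tnth_setc.
    by case/andP=> /negbTE ->.
  by move=> u u' H; apply: Ha => i; rewrite inE negb_or => /andP[_ /H].
rewrite ge0_integralZl //; first exact: measurable_iint_setc.
by move=> y _; exact: iint_ge0.
Qed.

End NonnegativeIntegrand.

Lemma iintD s h1 h2 : measurable_fun [set: T] h1 -> (forall v, (0 <= h1 v)%E) ->
  measurable_fun [set: T] h2 -> (forall v, (0 <= h2 v)%E) ->
  forall t, iint s (fun v => h1 v + h2 v)%E t = (iint s h1 t + iint s h2 t)%E.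
Proof.
move=> m1 p1 m2 p2; elim: s => [|j s IH] t //=.
transitivity (\int[mu]_(y in setT) (iint s h1 (setc t j y) + iint s h2 (setc t j y)))%E.
  by apply: eq_integral => y _; rewrite IH.
by rewrite ge0_integralD //; (try exact: measurable_iint_setc);
  move=> y _; exact: iint_ge0.
Qed.

Lemma le_iint s h1 h2 : measurable_fun [set: T] h1 -> (forall v, (0 <= h1 v)%E) ->
  measurable_fun [set: T] h2 -> (forall v, (h1 v <= h2 v)%E) ->
  forall t, (iint s h1 t <= iint s h2 t)%E.
Proof.
move=> m1 p1 m2 le12.
have p2 v : (0 <= h2 v)%E by exact: le_trans (p1 v) (le12 v).
elim: s => [|j s IH] t //=.
apply: ge0_le_integral => //; (try by move=> y _; exact: iint_ge0);
  (try by move=> y _; exact: IH); exact: measurable_iint_setc.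
Qed.

(* The inner integrals of [h1] vanish almost everywhere. *)
Lemma iint_eq0_mono s h1 h2 : measurable_fun [set: T] h1 -> (forall v, (0 <= h1 v)%E) ->
  measurable_fun [set: T] h2 -> (forall v, (0 <= h2 v)%E) ->
  (forall v, h1 v = 0%E -> h2 v = 0%E) ->
  forall t, iint s h1 t = 0%E -> iint s h2 t = 0%E.
Proof.
move=> m1 p1 m2 p2 H12; elim: s => [|j s IH] t /=; first exact: H12.
move=> I0.
have mF1 := measurable_iint_setc s t j m1 p1.
have ae1 : ae_eq mu setT (fun y => iint s h1 (setc t j y)) (cst 0%E).
  apply/(ae_eq_integral_abs mu measurableT mF1).
  by rewrite -I0; apply: eq_integral => y _; rewrite gee0_abs //; exact: iint_ge0.
rewrite (ae_eq_integral (cst 0%E)) ?integral0 //.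
- exact: measurable_iint_setc.
- by apply: filterS ae1 => y /= H1 _; apply: IH; exact: H1.
Qed.

End IteratedIntegral.

Section AlmostEverywhere.
Context {R : realType} {p : nat}.
Local Notation T := (p.-tuple R).
Implicit Types (h : T -> \bar R) (t : T).

Definition ind (A : set T) : T -> \bar R := fun t => (\1_A t)%:E.

Lemma measurable_ind A : measurable A -> measurable_fun [set: T] (ind A).
Proof. by move=> mA; apply/measurable_EFinP; exact: measurable_indic. Qed.

Lemma ind_ge0 A t : (0 <= ind A t)%E.
Proof. by rewrite lee_fin. Qed.

Lemma ind_in A t : A t -> ind A t = 1%E.
Proof. by move=> At; rewrite /ind indicE mem_set. Qed.

Lemma ind_out A t : ~ A t -> ind A t = 0%E.
Proof. by move=> At; rewrite /ind indicE memNset. Qed.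

Lemma ind_setU_le A B t : (ind (A `|` B) t <= ind A t + ind B t)%E.
Proof.
have [tA|nA] := pselect (A t).
  by rewrite (ind_in (or_introl tA)) (ind_in tA) leeDl ?ind_ge0.
have [tB|nB] := pselect (B t).
  by rewrite (ind_in (or_intror tB)) (ind_in tB) (ind_out nA) add0e.
by rewrite ind_out ?adde_ge0 ?ind_ge0 //; case.
Qed.

Lemma mule_ind_le h A t : (0 <= h t)%E -> (h t * ind A t <= h t)%E.
Proof.
move=> h0; have [At|At] := pselect (A t); first by rewrite ind_in // mule1.
by rewrite ind_out // mule0.
Qed.

Lemma ae_lebS (P Q : T -> Prop) : ae_leb P -> (forall t, P t -> Q t) -> ae_leb Q.
Proof.
case=> N [mN [zN sN]] PQ; exists N; split => //; split => //.
by move=> t /= nQ; apply: sN => /= /PQ.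
Qed.

Lemma ae_lebI (P Q : T -> Prop) : ae_leb P -> ae_leb Q -> ae_leb (fun t => P t /\ Q t).
Proof.
case=> N1 [m1 [z1 s1]] [N2 [m2 [z2 s2]]]; exists (N1 `|` N2).
have mU : measurable (N1 `|` N2) by exact: measurableU.
split => //; split; last first.
  move=> t /= PQt; have [Pt|/s1] := pselect (P t); last by left.
  by have [Qt|/s2] := pselect (Q t); [case: PQt|right].
apply/eqP; rewrite eq_le iint_ge0 ?andbT // => [|v]; last by rewrite lee_fin.
have := le_iint (enum 'I_p) (measurable_ind mU) (@ind_ge0 _)
  (emeasurable_funD (measurable_ind m1) (measurable_ind m2)) (@ind_setU_le N1 N2)
  (zerov R p).
rewrite iintD; try exact: measurable_ind; try exact: ind_ge0.
by move: z1 z2; rewrite /leb_int -/(ind N1) -/(ind N2) => -> ->; rewrite adde0.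
Qed.

Lemma ae_leb_notin (E : set T) : measurable E -> leb_int (ind E) = 0%E ->
  ae_leb (fun t => ~ E t).
Proof. by move=> mE z; exists E; split => //; split => // t /= /contrapT. Qed.

Lemma ae_leb_eq0 h : measurable_fun [set: T] h -> (forall v, (0 <= h v)%E) ->
  leb_int h = 0%E -> ae_leb (fun t => h t = 0%E).
Proof.
move=> mh h0 z; exists [set t | (0 < h t)%E].
have mN : measurable [set t | (0 < h t)%E].
  by have := measurable_lte measurableT (measurable_cst 0%E) mh; rewrite setTI.
split => //; split.
  rewrite /leb_int in z *; apply: (iint_eq0_mono mh h0 (measurable_ind mN) (ind_ge0 _) _ z).
  by move=> v hv; apply: ind_out; rewrite /= hv ltxx.
by move=> t /= ht; rewrite lt_def h0 andbT; exact/eqP.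
Qed.

Lemma leb_int_eq0_outside (S : {set 'I_p}) a : measurable_fun [set: T] a ->
  (forall v, (0 <= a v)%E) -> (forall t t', eq_outside (enum S) t t' -> a t = a t') ->
  iint (enum (~: S)%SET) a (zerov R p) = 0%E -> leb_int a = 0%E.
Proof.
move=> ma a0 Ha z; rewrite (leb_int_split ma a0 S).
have m1 : measurable_fun [set: T] (cst 1%E : T -> \bar R) := measurable_cst _.
have a_vol : iint (enum S) a = fun v => (a v * iint (enum S) (cst 1%E) v)%E.
  apply/funext => v; rewrite -(iintMl m1 (fun=> lee01) a0 Ha).
  by congr iint; apply/funext => w; rewrite /= mule1.
rewrite a_vol; apply: (iint_eq0_mono ma a0 _ _ _ z).
- by apply: emeasurable_funM => //; exact: measurable_iint m1 (fun=> lee01).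
- by move=> v; apply: mule_ge0 => //; exact: iint_ge0 (fun=> lee01) v.
- by move=> v ->; rewrite mul0e.
Qed.

Lemma iint_ind_eqy s h t : measurable_fun [set: T] h -> (forall v, (0 <= h v)%E) ->
  (iint s h t < +oo)%E -> iint s (ind [set v | h v = +oo%E]) t = 0%E.
Proof.
move=> mh h0 fin; set E := [set v | h v = +oo%E].
have mE : measurable E.
  by have := measurable_eqe measurableT mh (measurable_cst +oo%E); rewrite setTI.
have le_h : (+oo * iint s (ind E) t <= iint s h t)%E.
  rewrite -(iintMl (measurable_ind mE) (@ind_ge0 E) (fun=> leey _) (fun _ _ _ => erefl)).
  apply: le_iint => //.
  - by apply: emeasurable_funM => //; exact: measurable_ind.
  - by move=> v; apply: mule_ge0; [exact: leey | exact: ind_ge0].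
  - move=> v; have [Ev|Ev] := pselect (E v); last by rewrite ind_out // mule0.
    by rewrite ind_in // mule1 Ev.
move: (iint_ge0 s (@ind_ge0 E) t); rewrite le_eqVlt => /orP[/eqP <- //|pos].
by move: (le_lt_trans le_h fin); rewrite gt0_mulye // ltxx.
Qed.

Lemma ae_marg_fin (S : {set 'I_p}) (f : T -> R) : measurable_fun [set: T] f ->
  (forall v, 0 <= f v) -> (leb_int (fun v => (f v)%:E) < +oo)%E ->
  ae_leb (fun t => marg S f t != +oo%E).
Proof.
move=> mf f0 fin.
have mfE : measurable_fun [set: T] (fun v => (f v)%:E) by exact/measurable_EFinP.
have fE0 v : (0 <= (f v)%:E)%E by rewrite lee_fin.
set H := marg S f; set E := [set v | H v = +oo%E].
have mH : measurable_fun [set: T] H by exact: measurable_iint.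
have H0 v : (0 <= H v)%E by exact: iint_ge0.
have mE : measurable E.
  by have := measurable_eqe measurableT mH (measurable_cst +oo%E); rewrite setTI.
suff nullE : leb_int (ind E) = 0%E.
  by apply: (ae_lebS (ae_leb_notin mE nullE)) => t nE; exact/eqP.
apply: (leb_int_eq0_outside (S := S) (measurable_ind mE) (@ind_ge0 E)).
  move=> t t' /(iint_eq_outside (fun v => (f v)%:E)) e; have [Et|Et] := pselect (E t).
    by rewrite !ind_in // /E /= -[H t']e.
  by rewrite !ind_out // /E /= -[H t']e.
by apply: iint_ind_eqy => //; rewrite /H /marg -(leb_int_split mfE fE0 S).
Qed.

Lemma ae_iint_mul_null (S : {set 'I_p}) h N : measurable_fun [set: T] h ->
  (forall v, (0 <= h v)%E) -> measurable N -> leb_int (ind N) = 0%E ->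
  ae_leb (fun t => iint (enum S) (fun v => h v * ind N v)%E t = 0%E).
Proof.
move=> mh h0 mN zN.
have mhN : measurable_fun [set: T] (fun v => h v * ind N v)%E.
  by apply: emeasurable_funM => //; exact: measurable_ind.
have hN0 v : (0 <= h v * ind N v)%E by apply: mule_ge0 => //; exact: ind_ge0.
have hN_null : leb_int (fun v => h v * ind N v)%E = 0%E.
  apply: (iint_eq0_mono (measurable_ind mN) (@ind_ge0 _) mhN hN0 _ zN).
  by move=> v ->; rewrite mule0.
apply: ae_leb_eq0; [exact: measurable_iint | exact: iint_ge0 |].
apply: (leb_int_eq0_outside (S := S)); [exact: measurable_iint | exact: iint_ge0 | |].
  by move=> t t'; exact: iint_eq_outside.
by rewrite -(leb_int_split mhN hN0 S).
Qed.

Lemma ae_leb_iint (S : {set 'I_p}) h1 h2 :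
  measurable_fun [set: T] h1 -> (forall v, (0 <= h1 v)%E) ->
  measurable_fun [set: T] h2 -> (forall v, (0 <= h2 v)%E) ->
  ae_leb (fun t => h1 t = h2 t) ->
  ae_leb (fun t => iint (enum S) h1 t = iint (enum S) h2 t).
Proof.
move=> m1 p1 m2 p2 [N [mN [zN sN]]].
have split_null h : measurable_fun [set: T] h -> (forall v, (0 <= h v)%E) -> forall t,
    iint (enum S) h t = (iint (enum S) (fun v => h v * ind (~` N) v) t +
                         iint (enum S) (fun v => h v * ind N v) t)%E.
  move=> mh h0 t; rewrite -iintD.
  - congr iint; apply/funext => v; have [Nv|Nv] := pselect (N v).
      by rewrite (ind_in Nv) (@ind_out (~` N) v) ?mule1 ?mule0 ?add0e.
    by rewrite (ind_out Nv) (@ind_in (~` N) v) ?mule1 ?mule0 ?adde0.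
  - by apply: emeasurable_funM => //; apply: measurable_ind; exact: measurableC.
  - by move=> v; apply: mule_ge0 => //; exact: ind_ge0.
  - by apply: emeasurable_funM => //; exact: measurable_ind.
  - by move=> v; apply: mule_ge0 => //; exact: ind_ge0.
apply: (ae_lebS (ae_lebI (ae_iint_mul_null S m1 p1 mN zN)
                         (ae_iint_mul_null S m2 p2 mN zN))).
move=> t [z1 z2]; rewrite (split_null h1) // (split_null h2) // z1 z2; congr (_ + _)%E.
congr iint; apply/funext => v; have [Nv|Nv] := pselect (N v).
  by rewrite !(@ind_out (~` N) v) ?mule0.
rewrite !(@ind_in (~` N) v) //; congr (_ * _)%E.
by apply: contrapT => ne; apply: Nv; exact: sN.
Qed.

Lemma leb_int_ind_lt_eq0 u v : measurable_fun [set: T] u -> (forall t, (0 <= u t)%E) ->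
  measurable_fun [set: T] v -> (forall t, (0 <= v t)%E) ->
  (forall t, (v t < u t)%E -> v t \is a fin_num) ->
  let A := [set t | (v t < u t)%E] in
  leb_int (fun t => u t * ind A t)%E = leb_int (fun t => v t * ind A t)%E ->
  (leb_int (fun t => v t * ind A t)%E < +oo)%E ->
  leb_int (ind A) = 0%E.
Proof.
move=> mU u0 mv v0 vfin A eqA finA.
have mA : measurable A by have := measurable_lte measurableT mv mU; rewrite setTI.
set w := fun t => ((u t - v t) * ind A t)%E.
have mw : measurable_fun [set: T] w.
  by apply: emeasurable_funM; [exact: emeasurable_funB | exact: measurable_ind].
have w0 t : (0 <= w t)%E.
  rewrite /w; have [At|At] := pselect (A t); last by rewrite ind_out // mule0.
  by rewrite ind_in // mule1 suber_ge0 ?vfin //; exact: ltW.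
have mvA : measurable_fun [set: T] (fun t => v t * ind A t)%E.
  by apply: emeasurable_funM => //; exact: measurable_ind.
have vA0 t : (0 <= v t * ind A t)%E by apply: mule_ge0 => //; exact: ind_ge0.
have uA : (fun t => u t * ind A t)%E = (fun t => v t * ind A t + w t)%E.
  apply/funext => t; rewrite /w; have [At|At] := pselect (A t).
    by rewrite ind_in // !mule1 addeC subeK // vfin.
  by rewrite ind_out // !mule0 adde0.
have w_null : leb_int w = 0%E.
  have Lfin : leb_int (fun t => v t * ind A t)%E \is a fin_num.
    by rewrite ge0_fin_numE //; exact: iint_ge0.
  have eq2 : (leb_int (fun t => v t * ind A t) + leb_int w =
               leb_int (fun t => v t * ind A t))%E.
    transitivity (leb_int (fun t => u t * ind A t))%E; last exact: eqA.
    by rewrite uA /leb_int iintD.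
  by rewrite -(addeK (leb_int w) Lfin) [leb_int w + _]addeC eq2 subee.
apply: (iint_eq0_mono mw w0 (measurable_ind mA) (@ind_ge0 _) _ w_null).
move=> t wt; apply: ind_out => At; move: wt; rewrite /w ind_in // mule1 => wt.
by move: At; rewrite /A /= -sube_gt0 wt ltxx.
Qed.

Lemma ae_leb_eq_density u (f : T -> R) :
  measurable_fun [set: T] u -> (forall t, (0 <= u t)%E) ->
  measurable_fun [set: T] f -> (forall t, 0 <= f t) ->
  (forall A, measurable A ->
     leb_int (fun t => u t * ind A t)%E = leb_int (fun t => (f t)%:E * ind A t)%E) ->
  (leb_int (fun t => (f t)%:E) < +oo)%E ->
  ae_leb (fun t => u t = (f t)%:E).
Proof.
move=> mU u0 mf f0 H fin.
set v := fun t => (f t)%:E.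
have mv : measurable_fun [set: T] v by exact/measurable_EFinP.
have v0 t : (0 <= v t)%E by rewrite lee_fin.
have finA A : measurable A -> (leb_int (fun t => v t * ind A t)%E < +oo)%E.
  move=> mA; apply: le_lt_trans fin; apply: le_iint => //.
  - by apply: emeasurable_funM => //; exact: measurable_ind.
  - by move=> t; apply: mule_ge0 => //; exact: ind_ge0.
  - by move=> t; exact: mule_ind_le.
have mA : measurable [set t | (v t < u t)%E].
  by have := measurable_lte measurableT mv mU; rewrite setTI.
have mB : measurable [set t | (u t < v t)%E].
  by have := measurable_lte measurableT mU mv; rewrite setTI.
have nullA := leb_int_ind_lt_eq0 mU u0 mv v0 (fun t _ => fin_numE _) (H _ mA) (finA _ mA).
have nullB : leb_int (ind [set t | (u t < v t)%E]) = 0%E.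
  apply: (leb_int_ind_lt_eq0 mv v0 mU u0) => [t ut||].
  - by rewrite ge0_fin_numE //; exact: lt_trans ut (ltey _).
  - by rewrite H.
  - by rewrite H //; exact: finA.
apply: (ae_lebS (ae_lebI (ae_leb_notin mA nullA) (ae_leb_notin mB nullB))).
move=> t [/negP + /negP]; rewrite -!leNgt => le1 le2.
by apply/eqP; rewrite eq_le le1 le2.
Qed.

End AlmostEverywhere.

Lemma measurable_inv (R : realType) : measurable_fun [set: R] (@GRing.inv R).
Proof.
have m0 : measurable [set x : R | x = 0] by exact: measurable_set1.
have m1 : measurable [set x : R | x != 0] by apply: open_measurable; exact: open_neq.
have -> : [set: R] = [set x | x = 0] `|` [set x | x != 0].
  by apply/seteqP; split => x //= _; case: (eqVneq x 0) => [->|]; [left|right].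
apply/(measurable_funU _ m0 m1); split.
- move=> _ B mB; have [B0|B0] := pselect (B 0^-1).
    rewrite (_ : _ `&` _ = [set x | x = 0]) //.
    by apply/seteqP; split => x /=; [case|move=> ->].
  by rewrite (_ : _ `&` _ = set0) //; apply/seteqP; split => x //= [-> ].
- apply: open_continuous_measurable_fun; first exact: open_neq.
  by move=> x; rewrite inE /= => x0; exact: inv_continuous.
Qed.

Lemma cancel_factor_div_fine (R : realFieldType) (M Mf : \bar R) (q a f : R) :
  (0 < M)%E -> M != +oo%E -> (0 <= Mf)%E -> 0 <= a ->
  M = (a%:E * Mf)%E -> (M * q%:E = (a * f)%:E)%E -> q = f / fine Mf.
Proof.
move=> M_gt0 M_fin Mf0 a0 MaMf; rewrite {M}MaMf in M_gt0 M_fin *.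
have a_gt0 : 0 < a.
  by rewrite lt_def a0 andbT; apply: contraTneq M_gt0 => ->; rewrite mul0e ltxx.
case: Mf Mf0 M_gt0 M_fin => [r| |] //= _; last by rewrite gt0_muley ?lte_fin.
rewrite -EFinM lte_fin => ar_gt0 _ /(congr1 fine) /= arq.
have r_neq0 : r != 0 by apply: contraTneq ar_gt0 => ->; rewrite mulr0 ltxx.
apply: (mulfI (lt0r_neq0 ar_gt0)); rewrite arq.
by field; rewrite r_neq0.
Qed.

Section Imputation.
Context {R : realType} {p : nat}.
Local Notation T := (p.-tuple R).

Lemma leb_int_normalize (g : T -> R) : measurable_fun [set: T] g -> (forall t, 0 <= g t) ->
  (0 < leb_int (fun t => (g t)%:E))%E -> (leb_int (fun t => (g t)%:E) < +oo)%E ->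
  let c := fine (leb_int (fun t => (g t)%:E)) in
  [/\ 0 < c, measurable_fun [set: T] (fun t => g t / c), (forall t, 0 <= g t / c) &
     leb_int (fun t => (g t / c)%:E) = 1%E].
Proof.
move=> mg g0 g_gt0 g_fin c.
have mgE : measurable_fun [set: T] (fun t => (g t)%:E) by exact/measurable_EFinP.
have gE0 t : (0 <= (g t)%:E)%E by rewrite lee_fin.
have g_int : leb_int (fun t => (g t)%:E) = c%:E by rewrite fineK // ge0_fin_numE ?iint_ge0.
have c_gt0 : 0 < c by rewrite -lte_fin -g_int.
split => //; first exact: measurable_funM.
  by move=> t; exact: divr_ge0 (g0 t) (ltW c_gt0).
rewrite (_ : (fun t => _) = fun t => ((c^-1)%:E * (g t)%:E)%E); last first.
  by apply/funext => t; rewrite mulrC EFinM.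
have cE0 (v : T) : (0 <= cst (c^-1)%:E v)%E by rewrite lee_fin invr_ge0 ltW.
by rewrite /leb_int (iintMl mgE gE0 cE0) // -/(leb_int _) g_int -EFinM mulVf ?gt_eqF.
Qed.

Variable S : {set 'I_p}.

(* Fubini over the [S]-coordinates turns the hypothesis into equality of the
   integrals of [marg S phi * q] and [phi] over every measurable set. *)
Lemma ae_marg_mul_density (phi q : T -> R) :
  measurable_fun [set: T] phi -> (forall t, 0 <= phi t) ->
  measurable_fun [set: T] q -> (forall t, 0 <= q t) ->
  (leb_int (fun t => (phi t)%:E) < +oo)%E ->
  (forall A, measurable A ->
     leb_int (fun x => (phi x)%:E * iint (enum S) (fun v => (q v * \1_A v)%:E) x)%E =
     leb_int (fun x => (phi x * \1_A x)%:E)) ->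
  ae_leb (fun t => marg S phi t * (q t)%:E = (phi t)%:E)%E.
Proof.
move=> mphi phi0 mq q0 phi_fin HA.
have mphiE : measurable_fun [set: T] (fun t => (phi t)%:E) by exact/measurable_EFinP.
have phiE0 t : (0 <= (phi t)%:E)%E by rewrite lee_fin.
have mqE : measurable_fun [set: T] (fun t => (q t)%:E) by exact/measurable_EFinP.
have mM : measurable_fun [set: T] (marg S phi) by exact: measurable_iint.
have M0 t : (0 <= marg S phi t)%E by exact: iint_ge0.
apply: ae_leb_eq_density => //; first exact: emeasurable_funM.
  by move=> t; rewrite mule_ge0 ?lee_fin.
move=> A mA; set J := iint (enum S) (fun v => (q v * \1_A v)%:E).
have mqA : measurable_fun [set: T] (fun v => (q v * \1_A v)%:E).
  by apply/measurable_EFinP; apply: measurable_funM => //; exact: measurable_indic.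
have qA0 v : (0 <= (q v * \1_A v)%:E)%E by rewrite lee_fin mulr_ge0.
have mJ : measurable_fun [set: T] J by exact: measurable_iint.
have J0 t : (0 <= J t)%E by exact: iint_ge0.
have -> : (fun t => (phi t)%:E * ind A t)%E = fun t => (phi t * \1_A t)%:E.
  by apply/funext => t; rewrite EFinM.
have -> : (fun t => marg S phi t * (q t)%:E * ind A t)%E =
          fun t => (marg S phi t * (q t * \1_A t)%:E)%E.
  by apply/funext => t; rewrite -muleA -EFinM.
rewrite -(HA A mA) (leb_int_split _ _ S); first last.
- by move=> t; rewrite mule_ge0.
- exact: emeasurable_funM.
rewrite [RHS](leb_int_split _ _ S); first last.
- by move=> t; rewrite mule_ge0.
- exact: emeasurable_funM.
congr iint; apply/funext => t.
rewrite (iintMl mqA qA0 M0); last by move=> u u'; exact: iint_eq_outside.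
rewrite (_ : (fun v => _ * J v) = fun v => J v * (phi v)%:E)%E; last first.
  by apply/funext => v; rewrite muleC.
rewrite (iintMl mphiE phiE0 J0); last by move=> u u'; exact: iint_eq_outside.
by rewrite muleC.
Qed.

Lemma ae_marg_eq0 (h : T -> R) : measurable_fun [set: T] h -> (forall t, 0 <= h t) ->
  ae_leb (fun t => marg S h t = 0%E -> h t = 0).
Proof.
move=> mh h0.
have mhE : measurable_fun [set: T] (fun t => (h t)%:E) by exact/measurable_EFinP.
have hE0 t : (0 <= (h t)%:E)%E by rewrite lee_fin.
set Z := [set t | marg S h t = 0%E].
have mZ : measurable Z.
  have mM : measurable_fun [set: T] (marg S h) by exact: measurable_iint.
  by have := measurable_eqe measurableT mM (measurable_cst 0%E); rewrite setTI.
have mhZ : measurable_fun [set: T] (fun t => ind Z t * (h t)%:E)%E.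
  by apply: emeasurable_funM => //; exact: measurable_ind.
have hZ0 t : (0 <= ind Z t * (h t)%:E)%E by rewrite mule_ge0 ?ind_ge0.
have hZ_null : leb_int (fun t => ind Z t * (h t)%:E)%E = 0%E.
  rewrite (leb_int_split mhZ hZ0 S) -[RHS](iint0 (enum (~: S)%SET) (zerov R p)).
  congr iint; apply/funext => t.
  rewrite (iintMl mhE hE0 (@ind_ge0 _ _ Z)); last first.
    move=> u u' /(iint_eq_outside (fun v => (h v)%:E)) e.
    have [Zu|Zu] := pselect (Z u); [rewrite !ind_in | rewrite !ind_out] => //;
      by rewrite /Z /marg /= -e.
  have [Zt|Zt] := pselect (Z t); last by rewrite ind_out // mul0e.
  by rewrite ind_in // -[iint _ _ _]/(marg S h t) Zt mule0.
apply: (ae_lebS (ae_leb_eq0 mhZ hZ0 hZ_null)) => t + Zt.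
by rewrite ind_in // mul1e => -[].
Qed.

(* The factor is the ratio of the marginals of [h] and [f]. *)
Lemma ae_cond_dens_factor (h f : T -> R) :
  measurable_fun [set: T] h -> (forall t, 0 <= h t) ->
  measurable_fun [set: T] f -> (forall t, 0 <= f t) ->
  (leb_int (fun t => (h t)%:E) < +oo)%E ->
  ae_leb (fun t => (0 < marg S h t)%E -> cond_dens S h t = cond_dens S f t) ->
  exists a : T -> R, [/\ measurable_fun [set: T] a, (forall t, 0 <= a t),
    (forall t t', eq_outside (enum S) t t' -> a t = a t') &
    ae_leb (fun t => h t = a t * f t)].
Proof.
move=> mh h0 mf f0 h_fin hcond.
have mfE : measurable_fun [set: T] (fun t => (f t)%:E) by exact/measurable_EFinP.
have mhE : measurable_fun [set: T] (fun t => (h t)%:E) by exact/measurable_EFinP.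
have fineM g : measurable_fun [set: T] (fun t => (g t)%:E) -> (forall t, 0 <= g t) ->
    measurable_fun [set: T] (fun t => fine (marg S g t)).
  move=> mg g0; apply: measurableT_comp (fine_measurable measurableT) _.
  by apply: measurable_iint => // t; rewrite lee_fin.
exists (fun t => fine (marg S h t) / fine (marg S f t)); split.
- apply: measurable_funM; first exact: fineM.
  by apply: measurableT_comp (@measurable_inv R) _; exact: fineM.
- by move=> t; apply: divr_ge0; apply/fine_ge0/iint_ge0 => v; rewrite lee_fin.
- by move=> t t' tt'; rewrite /marg !(iint_eq_outside _ tt').
apply: (ae_lebS (ae_lebI (ae_lebI (ae_marg_fin S mh h0 h_fin) (ae_marg_eq0 mh h0)) hcond)).
move=> t [[M_fin M_eq0] cond_t].
have [M0|M_neq0] := eqVneq (marg S h t) 0%E; first by rewrite M_eq0 // M0 /= !mul0r.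
have M_gt0 : (0 < marg S h t)%E by rewrite lt_def M_neq0 iint_ge0 // => v; rewrite lee_fin.
have := cond_t M_gt0; rewrite /cond_dens => eq_cond.
have m_gt0 : 0 < fine (marg S h t) by rewrite fine_gt0 // M_gt0 ltey.
by rewrite -(divfK (lt0r_neq0 m_gt0) (h t)) eq_cond; ring.
Qed.

Lemma ae_marg_factor (h f a : T -> R) :
  measurable_fun [set: T] h -> (forall t, 0 <= h t) ->
  measurable_fun [set: T] f -> (forall t, 0 <= f t) ->
  measurable_fun [set: T] a -> (forall t, 0 <= a t) ->
  (forall t t', eq_outside (enum S) t t' -> a t = a t') ->
  ae_leb (fun t => h t = a t * f t) ->
  ae_leb (fun t => marg S h t = (a t)%:E * marg S f t)%E.
Proof.
move=> mh h0 mf f0 ma a0 aS hfac.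
have mfE : measurable_fun [set: T] (fun t => (f t)%:E) by exact/measurable_EFinP.
have fE0 t : (0 <= (f t)%:E)%E by rewrite lee_fin.
have maf : measurable_fun [set: T] (fun t => (a t * f t)%:E).
  by apply/measurable_EFinP; exact: measurable_funM.
have mhE : measurable_fun [set: T] (fun t => (h t)%:E) by exact/measurable_EFinP.
have hfacE : ae_leb (fun t => (h t)%:E = (a t * f t)%:E).
  by apply: (ae_lebS hfac) => t ->.
have af0 t : (0 <= (a t * f t)%:E)%E by rewrite lee_fin mulr_ge0.
have hE0 t : (0 <= (h t)%:E)%E by rewrite lee_fin.
apply: (ae_lebS (ae_leb_iint S mhE hE0 maf af0 hfacE)) => t; rewrite /marg => ->.
rewrite -(iintMl mfE fE0 (a := fun t => (a t)%:E)) => [|v|u u' /aS ->] //.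
by rewrite lee_fin.
Qed.

End Imputation.

Theorem theorem1 (R : realType) (p K : nat) (hK : (0 < K)%N)
  (obs : 'I_K -> {set 'I_p})
  (hobs1 : obs (Ordinal hK) = [set: 'I_p]%SET)
  (hobs_ne : (\bigcap_(j < K) obs j)%SET != finset.set0)
  (g : 'I_K -> p.-tuple R -> R)
  (hg : forall j, is_density (g j))
  (hmass : (\sum_(j < K) leb_int (fun t => (g j t)%:E) = 1)%E)
  (hpi1 : (0 < leb_int (fun t => (g (Ordinal hK) t)%:E))%E)
  (hMAR : forall j : 'I_K,
     ae_leb (fun t =>
       (0 < marg (~: \bigcap_(i < K) obs i)%SET (g j) t)%E ->
       cond_dens (~: \bigcap_(i < K) obs i)%SET (g j) t =
       cond_dens (~: \bigcap_(i < K) obs i)%SET (fun v => \sum_(i < K) g i v) t))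
  (k : 'I_K) (hk : k != Ordinal hK)
  (Ghat : p.-tuple R -> p.-tuple R) (hG : measurable_fun setT Ghat)
  (ptheta : p.-tuple R -> R) (hpt : is_density ptheta)
  (hpt_cond : forall (t : p.-tuple R) (A : set (p.-tuple R)), measurable A ->
     leb_int (fun z => (std_gauss z * \1_A (gen_out Ghat (obs k) t z))%:E) =
     iint (enum (~: obs k)%SET) (fun v => (ptheta v * \1_A v)%:E) t)
  (hPk : forall A : set (p.-tuple R), measurable A ->
     let phi1 := fun x => g (Ordinal hK) x /
                   fine (leb_int (fun t => (g (Ordinal hK) t)%:E)) in
     leb_int (fun x => ((phi1 x)%:E *
        leb_int (fun z => (std_gauss z * \1_A (gen_out Ghat (obs k) x z))%:E))%E)
     = leb_int (fun x => (phi1 x * \1_A x)%:E)) :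
  let phi1 := fun x => g (Ordinal hK) x /
                fine (leb_int (fun t => (g (Ordinal hK) t)%:E)) in
  ae_leb (fun t =>
    (0 < marg (~: obs k)%SET phi1 t)%E ->
    ptheta t = cond_dens (~: obs k)%SET (fun v => \sum_(i < K) g i v) t).
Proof.
move=> phi1; set g1 := g (Ordinal hK); set f := fun v => \sum_(i < K) g i v.
set S := (~: obs k)%SET; set S0 := (~: \bigcap_(j < K) obs j)%SET.
have mf : measurable_fun [set: p.-tuple R] f by apply: measurable_sum => j; exact: (hg j).1.
have f0 t : 0 <= f t by apply: sumr_ge0 => j _; exact: (hg j).2.
have g1_fin : (leb_int (fun t => (g1 t)%:E) < +oo)%E.
  apply: le_lt_trans (ltey 1%E); rewrite -hmass (bigD1 (Ordinal hK)) //= leeDl //.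
  by rewrite sume_ge0 // => j _; apply: iint_ge0 => t; rewrite lee_fin (hg j).2.
have [c_gt0 mphi1 phi10 phi1_int] := leb_int_normalize (hg _).1 (hg _).2 hpi1 g1_fin.
set c := fine _ in c_gt0 mphi1 phi10 phi1_int.
have phi1_fin : (leb_int (fun t => (phi1 t)%:E) < +oo)%E by rewrite phi1_int ltey.
have dens : ae_leb (fun t => marg S phi1 t * (ptheta t)%:E = (phi1 t)%:E)%E.
  apply: (ae_marg_mul_density mphi1 phi10 hpt.1 hpt.2 phi1_fin) => A mA.
  by rewrite -(hPk A mA); congr leb_int; apply/funext => x; rewrite hpt_cond.
have [a [ma a0 aS0 g1_fac]] :=
  ae_cond_dens_factor (hg _).1 (hg _).2 mf f0 g1_fin (hMAR (Ordinal hK)).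
have SS0 : {subset enum S <= enum S0}.
  by move=> i; rewrite !mem_enum !inE; apply: contra => /bigcapP/(_ k isT).
have phi1_fac : ae_leb (fun t => phi1 t = a t / c * f t).
  by apply: (ae_lebS g1_fac) => t g1t; rewrite /phi1 -/c g1t mulrAC.
have marg_fac := ae_marg_factor mphi1 phi10 mf f0
  (measurable_funM ma (measurable_cst _)) (fun t => divr_ge0 (a0 t) (ltW c_gt0))
  (fun t t' tt' => congr1 (fun x => x / c) (aS0 t t' (eq_outside_sub SS0 tt'))) phi1_fac.
apply: (ae_lebS (ae_lebI (ae_lebI dens (ae_marg_fin S mphi1 phi10 phi1_fin))
                         (ae_lebI phi1_fac marg_fac))) => t [[dt ft] [et mt]] pos.
apply: (cancel_factor_div_fine pos ft _ _ mt).
- by apply: iint_ge0 => v; rewrite lee_fin.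
- exact: divr_ge0 (a0 t) (ltW c_gt0).
- by rewrite dt et.
Qed.
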